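(* Let $Y$ be a finite set, $\mathcal{S}$ a set of splits of $Y$, $\alpha:\mathcal{S}\to\mathbb{R}_{>0}$, and $\delta=\delta_{(\mathcal{S},\alpha)}$ the associated split system diversity. Then $P_\delta=P^{(2)}_\delta$, and hence $T_\delta=T^{(2)}_\delta$.
   Context: A split of $Y$ is an unordered pair $\{C,D\}$ of non-empty disjoint subsets with $C\cup D=Y$; it splits $A\subseteq Y$ if $A\cap C\ne\emptyset$ and $A\cap D\ne\emptyset$. $\delta_{(\mathcal{S},\alpha)}(A)=\sum_{S\in\mathcal{S},\ S\text{ splits }A}\alpha(S)$. $P_\delta=\{f\in\mathbb{R}^{\mathcal{P}(Y)}: f(\emptyset)=0,\ \sum_{A\in\mathcal{A}}f(A)\ge\delta(\bigcup\mathcal{A})\text{ for all }\mathcal{A}\subseteq\mathcal{P}(Y)\}$ and $T_\delta$ is its set of minimal elements (coordinatewise order); $P^{(2)}_\delta=\{f\in\mathbb{R}^{\mathcal{P}(Y)}:f(\emptyset)=0,\ f(A)+f(B)\ge\delta(A\cup B)\ \forall A,B\in\mathcal{P}(Y)\}$ and $T^{(2)}_\delta$ is its set of minimal elements. *)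

From HB Require Import structures.
From mathcomp Require Import all_boot all_order all_algebra.
Set Implicit Arguments. Unset Strict Implicit. Unset Printing Implicit Defensive.
Import Order.TTheory GRing.Theory Num.Theory.
Local Open Scope ring_scope.

Section SplitDefs.
Variables (Y : finType) (R : realFieldType).

Definition is_split (s : {set {set Y}}) : bool :=
  [exists C : {set Y}, exists D : {set Y},
     [&& s == [set C; D], C != set0, D != set0,
         [disjoint C & D] & C :|: D == [set: Y]]].

Definition splits (s : {set {set Y}}) (A : {set Y}) : bool :=
  [forall C in s, A :&: C != set0].

Definition split_div (S : {set {set {set Y}}}) (alpha : {set {set Y}} -> R)
  (A : {set Y}) : R :=
  \sum_(s in S | splits s A) alpha s.

Definition inP (delta : {set Y} -> R) (f : {ffun {set Y} -> R}) : Prop :=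
  f set0 = 0 /\
  forall AA : {set {set Y}}, delta (\bigcup_(A in AA) A) <= \sum_(A in AA) f A.

Definition inP2 (delta : {set Y} -> R) (f : {ffun {set Y} -> R}) : Prop :=
  f set0 = 0 /\ forall A B : {set Y}, delta (A :|: B) <= f A + f B.

Definition minimal_in (P : {ffun {set Y} -> R} -> Prop) (f : {ffun {set Y} -> R}) : Prop :=
  P f /\ forall g, P g -> (forall A, g A <= f A) -> g = f.

Definition inT delta := minimal_in (inP delta).
Definition inT2 delta := minimal_in (inP2 delta).
End SplitDefs.

From HB Require Import structures.
From mathcomp Require Import all_boot all_order all_algebra.
From mathcomp Require Import zify lra.
Import Order.TTheory GRing.Theory Num.Theory.
Local Open Scope ring_scope.

(* Fix one split {C, D} and write [A] for "A is split".  For non-empty x we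
   have [y :|: z] <= [y :|: x] + [x :|: z], and a non-empty part of an unsplit
   set meets the same side as that set; together these give
     2[x :|: B] + [z :|: y] <= 2[B] + [x :|: y] + [z :|: x]   for y, z in B.
   Summing over the splits, the same holds for delta, and induction along a
   list x_0, ..., x_n of non-empty sets turns it into
     2 delta(x_0 :|: ... :|: x_n) <= sum_i delta(x_i :|: x_(i+1))
   with indices taken mod n+1.  If delta(A :|: B) <= f A + f B for all A, B,
   the right-hand side is at most 2 sum_i f x_i. *)

Section SplitIndicator.
Variable Y : finType.
Implicit Types A B C D x y z : {set Y}.

Lemma splitsE C D A :
  splits [set C; D] A = (A :&: C != set0) && (A :&: D != set0).
Proof.
apply/forall_inP/andP => [H | [H1 H2] E].
  by split; apply: H; rewrite !inE eqxx ?orbT.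
by rewrite !inE => /orP[]/eqP->.
Qed.

Lemma setIUl_neq0 A B C :
  ((A :|: B) :&: C != set0) = (A :&: C != set0) || (B :&: C != set0).
Proof. by rewrite setIUl setU_eq0 negb_and. Qed.

Lemma setI_neq0S C A B : A \subset B -> A :&: C != set0 -> B :&: C != set0.
Proof.
move=> sAB /set0Pn[a /setIP[aA aC]]; apply/set0Pn; exists a.
by rewrite inE (subsetP sAB) // aC.
Qed.

Lemma splitsS (s : {set {set Y}}) A B : A \subset B -> splits s A -> splits s B.
Proof.
by move=> sAB /forall_inP sA; apply/forall_inP => C /sA; apply: setI_neq0S sAB.
Qed.

Variables C D : {set Y}.
Hypothesis covCD : C :|: D = [set: Y].
Local Notation chi := (splits [set C; D]).

Lemma setI_side_neq0 A : A != set0 -> (A :&: C != set0) || (A :&: D != set0).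
Proof.
move=> /set0Pn[a aA]; have : a \in C :|: D by rewrite covCD inE.
by case/setUP => [aC | aD]; apply/orP; [left | right];
  apply/set0Pn; exists a; rewrite inE aA.
Qed.

Lemma splitsU_triangle x y z :
  x != set0 -> chi (y :|: z) -> chi (y :|: x) || chi (x :|: z).
Proof.
move=> /setI_side_neq0; rewrite !splitsE !setIUl_neq0.
by case: (x :&: C != set0); case: (x :&: D != set0);
   case: (y :&: C != set0); case: (y :&: D != set0);
   case: (z :&: C != set0); case: (z :&: D != set0).
Qed.

Lemma splitsU_unsplit x y B :
  ~~ chi B -> y != set0 -> y \subset B -> chi (x :|: y) = chi (x :|: B).
Proof.
move=> nsB /setI_side_neq0 ny syB; move: nsB ny.
move: (setI_neq0S C y B syB) (setI_neq0S D y B syB) => /implyP + /implyP.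
rewrite !splitsE !setIUl_neq0.
by case: (y :&: C != set0); case: (y :&: D != set0);
   case: (B :&: C != set0); case: (B :&: D != set0).
Qed.

Lemma splits_cycle_step x y z B :
  x != set0 -> y != set0 -> z != set0 -> y \subset B -> z \subset B ->
  (2 * chi (x :|: B) + chi (z :|: y) <=
   2 * chi B + chi (x :|: y) + chi (z :|: x))%N.
Proof.
move=> nx ny nz syB szB; have [sB | nsB] := boolP (chi B).
  have -> : chi (x :|: B) by apply: splitsS sB; apply: subsetUr.
  have := splitsU_triangle x z y nx.
  by case: (chi (z :|: y)) => [/(_ isT)/orP[] -> | _] //=; lia.
have -> : chi (z :|: y) = false.
  by apply/negbTE; apply: contra nsB; apply: splitsS; rewrite subUset szB.
by rewrite (setUC z) (splitsU_unsplit x y B nsB ny syB)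
  (splitsU_unsplit x z B nsB nz szB); lia.
Qed.

End SplitIndicator.

Section SplitDiversity.
Variables (R : realFieldType) (Y : finType).

Lemma minimal_in_iff (P Q : {ffun {set Y} -> R} -> Prop) :
  (forall f, P f <-> Q f) -> forall f, minimal_in P f <-> minimal_in Q f.
Proof.
move=> PQ f; split=> -[Pf minf]; split=> [| g /PQ]; by [apply/PQ | apply: minf].
Qed.

Lemma big_nonempty_enum (V : Type) (idx : V) (op : Monoid.com_law idx)
  (AA : {set {set Y}}) (F : {set Y} -> V) : F set0 = idx ->
  \big[op/idx]_(A in AA) F A = \big[op/idx]_(A <- [seq A <- enum AA | A != set0]) F A.
Proof.
move=> F0; rewrite big_filter -big_enum [RHS]big_mkcond; apply: eq_bigr => A _.
by case: eqVneq => [-> |].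
Qed.

Fixpoint path_sum (g : {set Y} -> R) (x : {set Y}) (l : seq {set Y}) : R :=
  if l is y :: l' then g (x :|: y) + path_sum g y l' else 0.

Lemma path_sum_le (g f : {set Y} -> R) :
  (forall A B, g (A :|: B) <= f A + f B) ->
  forall x l, path_sum g x l + f (last x l) <= f x + (\sum_(A <- l) f A) *+ 2.
Proof.
move=> gf x l; elim: l x => [| y l IHl] x /=; first by rewrite big_nil mul0rn addr0 add0r.
have := gf x y; have := IHl y; rewrite big_cons; lra.
Qed.

Variables (S : {set {set {set Y}}}) (alpha : {set {set Y}} -> R).
Hypothesis HS : forall s, s \in S -> is_split s.
Hypothesis alpha_ge0 : forall s, s \in S -> 0 <= alpha s.
Implicit Types A B x y z : {set Y}.
Local Notation d := (split_div S alpha).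

Lemma split_divE A : d A = \sum_(s in S) alpha s *+ splits s A.
Proof. by rewrite /split_div big_mkcondr; apply: eq_bigr => s _; case: splits. Qed.

Lemma split_div_ge0 A : 0 <= d A.
Proof.
by rewrite split_divE sumr_ge0 // => s sS; rewrite mulrn_wge0 ?alpha_ge0.
Qed.

Lemma split_div0 : d set0 = 0.
Proof.
rewrite split_divE big1 // => s /HS/existsP[C /existsP[D /and5P[/eqP-> _ _ _ _]]].
by rewrite splitsE !set0I eqxx.
Qed.

Lemma split_div_cycle_step x y z B :
  x != set0 -> y != set0 -> z != set0 -> y \subset B -> z \subset B ->
  d (x :|: B) *+ 2 + d (z :|: y) <= d B *+ 2 + d (x :|: y) + d (z :|: x).
Proof.
move=> nx ny nz syB szB; rewrite !split_divE -!sumrMnl -!big_split /=.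
apply: ler_sum => s sS; rewrite -!mulrnA -!mulrnDr.
apply: ler_wpMn2l; first exact: alpha_ge0.
have /existsP[C /existsP[D /and5P[/eqP-> _ _ _ /eqP covCD]]] := HS _ sS.
by rewrite !(mulnC _ 2%N) splits_cycle_step.
Qed.

Lemma split_div_cycle x y l :
  all (fun A => A != set0) [:: x, y & l] ->
  d (\bigcup_(A <- x :: y :: l) A) *+ 2 <= path_sum d x (y :: l) + d (last y l :|: x).
Proof.
elim: l x y => [| w l IHl] x y nxyl.
  by rewrite !big_cons big_nil setU0 /= addr0 (setUC y) mulr2n.
have ne := allP nxyl; have /andP[_ nywl] := nxyl.
have IHy := IHl y w nywl.
set B := \bigcup_(A <- [:: y, w & l]) A in IHy *.
have sB A : A \in [:: y, w & l] -> A \subset B.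
  by move=> Al; rewrite /B bigcup_seq (bigcup_sup A).
have lastB : last w l \in [:: y, w & l] by rewrite inE mem_last orbT.
have [nx ny nz] : [/\ x != set0, y != set0 & last w l != set0].
  by split; apply: ne; rewrite in_cons ?lastB ?in_cons ?eqxx ?orbT.
have := split_div_cycle_step x y (last w l) B nx ny nz (sB y (mem_head _ _)) (sB _ lastB).
rewrite big_cons -/B /= in IHy *; lra.
Qed.

Lemma split_div_bigcup_le (f : {set Y} -> R) (l : seq {set Y}) :
  f set0 = 0 -> (forall A B, d (A :|: B) <= f A + f B) ->
  all (fun A => A != set0) l -> d (\bigcup_(A <- l) A) <= \sum_(A <- l) f A.
Proof.
move=> f0 fd; case: l => [| x [| y l]] nl.
- by rewrite !big_nil split_div0.
- by have := fd x set0; rewrite !big_cons !big_nil f0 !addr0.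
have := split_div_cycle x y l nl; have := path_sum_le _ _ fd x (y :: l).
have := fd (last y l) x; rewrite !big_cons /=; lra.
Qed.

Lemma inP_inP2 f : inP d f <-> inP2 d f.
Proof.
split=> [[f0 fP] | [f0 fP2]]; split=> //.
  move=> A B; have [<- | nAB] := eqVneq A B.
    have := fP [set A]; rewrite !big_set1 setUid => dA.
    by rewrite (le_trans dA) // lerDl (le_trans (split_div_ge0 _) dA).
  by have := fP [set A; B]; rewrite !big_setU1 ?inE //= !big_set1.
move=> AA; rewrite !big_nonempty_enum //.
exact/split_div_bigcup_le/filter_all.
Qed.

End SplitDiversity.

Theorem mainTheorem17 (R : realFieldType) (Y : finType)
  (S : {set {set {set Y}}}) (alpha : {set {set Y}} -> R)
  (HS : forall s, s \in S -> is_split s)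
  (Halpha : forall s, s \in S -> 0 < alpha s) :
  (forall f, inP (split_div S alpha) f <-> inP2 (split_div S alpha) f) /\
  (forall f, inT (split_div S alpha) f <-> inT2 (split_div S alpha) f).
Proof.
have PP2 := @inP_inP2 R Y S alpha HS (fun s sS => ltW (Halpha s sS)).
by split=> // f; apply: minimal_in_iff.
Qed.
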